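(* There is a constant $c>0$ such that for every $n\ge1$: (i) there is a formula $\phi\in\mathrm{LTL}[\mathsf F]$ with $\mathrm{size}(\phi)\le c\,n$ and $\mathcal L^\omega(\phi)=\mathcal L(\Phi_n)^-\cdot\Sigma^\omega$; and (ii) for every formula $\psi\in\mathsf F(\mathrm{LTL}[\mathsf Y,\mathsf{wY},\mathsf O,\mathsf H])$, if $\mathcal L^\omega(\psi)=\mathcal L(\Phi_n)^-\cdot\Sigma^\omega$ then $\mathrm{size}(\psi)\ge2^n$.
   Context: Fix $n\ge1$ and atomic propositions $AP=\{\tilde p,\tilde q\}\cup\{p_1,\dots,p_n\}\cup\{q_1,\dots,q_n\}$ (distinct), $\Sigma=2^{AP}$. Formulae (negation normal form) are built from literals $p,\neg p$ with $\land,\lor$ and operators $\mathsf X,\mathsf{wX},\mathsf F,\mathsf G,\mathsf Y,\mathsf{wY},\mathsf O,\mathsf H$. Finite-trace semantics on $\sigma\in\Sigma^+$, positions $0\le i<|\sigma|$: $\mathsf X\phi$: $i+1<|\sigma|$ and $\phi$ at $i+1$; $\mathsf{wX}\phi$: $i+1=|\sigma|$ or $\phi$ at $i+1$; $\mathsf F\phi$/$\mathsf G\phi$: $\phi$ at some/every $j$ with $i\le j<|\sigma|$; $\mathsf Y\phi$: $i>0$ and $\phi$ at $i-1$; $\mathsf{wY}\phi$: $i=0$ or $\phi$ at $i-1$; $\mathsf O\phi$/$\mathsf H\phi$: $\phi$ at some/every $0\le j\le i$; $\mathcal L(\phi)=\{\sigma\in\Sigma^+:\sigma,0\models\phi\}$.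 Infinite-trace semantics on $\sigma\in\Sigma^\omega$, positions $i\in\mathbb N$: same clauses except $\mathsf X\phi$ and $\mathsf{wX}\phi$ both mean $\phi$ at $i+1$, and $\mathsf F\phi$/$\mathsf G\phi$ mean $\phi$ at some/every $j\ge i$; $\mathcal L^\omega(\phi)=\{\sigma\in\Sigma^\omega:\sigma,0\models\phi\}$. Size: literals 1, unary operators add 1, binary connectives sum plus 1. $\mathrm{LTL}[S]$: formulae whose temporal operators are in $S$; $\mathsf F(\mathrm{LTL}[S])$: formulae $\mathsf F(\alpha)$ with $\alpha\in\mathrm{LTL}[S]$. The reverse $\sigma^-$ of $\sigma\in\Sigma^+$ satisfies $|\sigma^-|=|\sigma|$ and $\sigma^-[i]=\sigma[|\sigma|-1-i]$; $\mathcal L^-=\{\sigma^-:\sigma\in\mathcal L\}$; $\mathcal L\cdot\Sigma^\omega=\{\sigma\sigma':\sigma\in\mathcal L,\sigma'\in\Sigma^\omega\}$. $\Phi_n := \mathsf{F}\big(\tilde q\land\bigwedge_{i=1}^n\big((q_i\land\mathsf{O}(\tilde p\land p_i))\lor(\neg q_i\land\mathsf{O}(\tilde p\land\neg p_i))\big)\big)$. *)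

From mathcomp Require Import all_boot.
Set Implicit Arguments. Unset Strict Implicit. Unset Printing Implicit Defensive.

(* Atomic propositions AP = {~p, ~q} ∪ {p_1..p_n} ∪ {q_1..q_n} (distinct). *)
Inductive AP (n : nat) : Type :=
| Ptil : AP n
| Qtil : AP n
| Pi : 'I_n -> AP n
| Qi : 'I_n -> AP n.

Definition letter (n : nat) := AP n -> bool.

(* LTL formulae in negation normal form over atoms of type A. *)
Inductive form (A : Type) : Type :=
| Lit : A -> bool -> form A          (* Lit a true = a, Lit a false = ¬a *)
| And : form A -> form A -> form A
| Or  : form A -> form A -> form A
| Xn  : form A -> form A
| WX  : form A -> form A
| Fn  : form A -> form A
| Gn  : form A -> form A
| Yn  : form A -> form A
| WY  : form A -> form A
| On  : form A -> form A
| Hn  : form A -> form A.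

Arguments Lit {A}.

Fixpoint fsize A (f : form A) : nat :=
  match f with
  | Lit _ _ => 1
  | And a b | Or a b => fsize a + fsize b + 1
  | Xn a | WX a | Fn a | Gn a | Yn a | WY a | On a | Hn a => fsize a + 1
  end.

Fixpoint in_LTL_F A (f : form A) : Prop :=
  match f with
  | Lit _ _ => True
  | And a b | Or a b => in_LTL_F a /\ in_LTL_F b
  | Fn a => in_LTL_F a
  | _ => False
  end.

Fixpoint in_LTL_past A (f : form A) : Prop :=
  match f with
  | Lit _ _ => True
  | And a b | Or a b => in_LTL_past a /\ in_LTL_past b
  | Yn a | WY a | On a | Hn a => in_LTL_past a
  | _ => False
  end.

Definition in_F_past A (f : form A) : Prop :=
  exists alpha, f = Fn alpha /\ in_LTL_past alpha.

Fixpoint sat_fin A (s : seq (A -> bool)) (i : nat) (f : form A) : Prop :=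
  match f with
  | Lit a b => nth (fun _ => false) s i a = b
  | And a b => sat_fin s i a /\ sat_fin s i b
  | Or a b => sat_fin s i a \/ sat_fin s i b
  | Xn a => i.+1 < size s /\ sat_fin s i.+1 a
  | WX a => i.+1 = size s \/ sat_fin s i.+1 a
  | Fn a => exists j, i <= j /\ j < size s /\ sat_fin s j a
  | Gn a => forall j, i <= j -> j < size s -> sat_fin s j a
  | Yn a => 0 < i /\ sat_fin s i.-1 a
  | WY a => i = 0 \/ sat_fin s i.-1 a
  | On a => exists j, j <= i /\ sat_fin s j a
  | Hn a => forall j, j <= i -> sat_fin s j a
  end.

Fixpoint sat_inf A (w : nat -> (A -> bool)) (i : nat) (f : form A) : Prop :=
  match f with
  | Lit a b => w i a = b
  | And a b => sat_inf w i a /\ sat_inf w i b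
  | Or a b => sat_inf w i a \/ sat_inf w i b
  | Xn a => sat_inf w i.+1 a
  | WX a => sat_inf w i.+1 a
  | Fn a => exists j, i <= j /\ sat_inf w j a
  | Gn a => forall j, i <= j -> sat_inf w j a
  | Yn a => 0 < i /\ sat_inf w i.-1 a
  | WY a => i = 0 \/ sat_inf w i.-1 a
  | On a => exists j, j <= i /\ sat_inf w j a
  | Hn a => forall j, j <= i -> sat_inf w j a
  end.

Definition lang_fin A (f : form A) (s : seq (A -> bool)) : Prop :=
  0 < size s /\ sat_fin s 0 f.

(* L^- = { σ^- : σ ∈ L } ; σ ∈ L^- iff rev σ ∈ L. *)
Definition rev_lang A (L : seq (A -> bool) -> Prop) (s : seq (A -> bool)) : Prop :=
  exists t, L t /\ s = rev t.

Definition concat_omega A (L : seq (A -> bool) -> Prop) (w : nat -> (A -> bool)) : Prop :=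
  exists u (w' : nat -> (A -> bool)), L u /\
    forall i a, w i a = (if i < size u then nth (fun _ => false) u i a else w' (i - size u) a).

Fixpoint bigAnd A (d : form A) (l : seq (form A)) : form A :=
  match l with
  | [::] => d
  | [:: x] => x
  | x :: l' => And x (bigAnd d l')
  end.

(* Φ_n = F(~q ∧ ⋀_{i=1}^n ((q_i ∧ O(~p ∧ p_i)) ∨ (¬q_i ∧ O(~p ∧ ¬p_i)))) *)
Definition Phi_conj (n : nat) (i : 'I_n) : form (AP n) :=
  Or (And (Lit (Qi i) true) (On (And (Lit (@Ptil n) true) (Lit (Pi i) true))))
     (And (Lit (Qi i) false) (On (And (Lit (@Ptil n) true) (Lit (Pi i) false)))).

Definition Phi (n : nat) : form (AP n) :=
  Fn (match [seq Phi_conj i | i <- enum 'I_n] with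
      | [::] => Lit (@Qtil n) true
      | l => And (Lit (@Qtil n) true) (bigAnd (Lit (@Qtil n) true) l)
      end).

(* (i): reading a finite word backwards turns the past operator O into F, so the formula
   obtained from Phi_n by replacing O with F defines L(Phi_n)^- . Sigma^omega, and it has
   size 14 n + 2.
   (ii): let F alpha define the language, alpha a past formula. For a set S of vectors of
   {0,1}^n, take the word listing the vectors of S as ~q-letters, followed by the ~p-letter
   of a vector v: F alpha holds on it iff v is in S. Past formulas are evaluated online --
   the truth values of all subformulas of alpha at t+1 depend only on those at t and on the
   letter at t+1 -- so the truth values at the end of the S-block determine S. There are
   2^(2^n) sets S and at most 2^|alpha| such profiles. *)

From mathcomp Require Import all_boot zify.
From Stdlib Require Import ClassicalEpsilon.

Set Implicit Arguments.
Unset Strict Implicit.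
Unset Printing Implicit Defensive.

Arguments Ptil {n}.
Arguments Qtil {n}.

Local Notation blank := (fun _ : AP _ => false).

Lemma bool_cases_iff (b : bool) (P : bool -> Prop) :
  (b = true /\ P true) \/ (b = false /\ P false) <-> P b.
Proof. by case: b; split=> [[[]|[]]|] //; [left|right]. Qed.

Section BigAnd.
Variables (A : Type) (P : form A -> Prop).
Hypothesis P_And : forall a b, P (And a b) <-> P a /\ P b.

Lemma bigAnd_map_iff (I : eqType) (d : form A) (f : I -> form A) (s : seq I) :
  s != [::] -> P (bigAnd d (map f s)) <-> (forall x, x \in s -> P (f x)).
Proof.
elim: s => [//|x [|y s] IH] _.
  by split=> [Px z|]; [rewrite inE => /eqP -> | apply; rewrite inE].
rewrite [bigAnd _ _]/= P_And (IH isT); split=> [[Px Ps] z|Ps].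
  by rewrite inE => /predU1P[->|]; [|apply: Ps].
by split=> [|z zs]; apply: Ps; rewrite inE ?eqxx ?zs ?orbT.
Qed.

End BigAnd.

Lemma fsize_bigAnd_map A (I : eqType) (d : form A) (f : I -> form A) (s : seq I) k :
  (forall x, fsize (f x) = k) -> s != [::] ->
  (fsize (bigAnd d (map f s))).+1 = k.+1 * size s.
Proof.
move=> fk; elim: s => [//|x [|y s] IH] _ /=; rewrite fk ?muln1 //.
by move: (IH isT) => /=; rewrite [in RHS]mulnS; lia.
Qed.

Lemma enum_ord_neq_nil n : 0 < n -> enum 'I_n != [::].
Proof. by rewrite -size_eq0 size_enum_ord -lt0n. Qed.

Lemma PhiE n : 0 < n ->
  Phi n = Fn (And (Lit Qtil true)
                  (bigAnd (Lit Qtil true) [seq Phi_conj i | i <- enum 'I_n])).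
Proof.
move=> /enum_ord_neq_nil; rewrite /Phi.
by case: (enum 'I_n) => [|i s].
Qed.

Definition PhiF_conj n (i : 'I_n) : form (AP n) :=
  Or (And (Lit (Qi i) true) (Fn (And (Lit Ptil true) (Lit (Pi i) true))))
     (And (Lit (Qi i) false) (Fn (And (Lit Ptil true) (Lit (Pi i) false)))).

Definition PhiF n : form (AP n) :=
  Fn (And (Lit Qtil true)
          (bigAnd (Lit Qtil true) [seq PhiF_conj i | i <- enum 'I_n])).

Lemma PhiF_LTL_F n : in_LTL_F (PhiF n).
Proof.
split=> //; case: (altP (enum 'I_n =P [::])) => [-> //|ne].
by apply/(bigAnd_map_iff (P := @in_LTL_F _)) => // i _.
Qed.

Lemma fsize_PhiF n : 0 < n -> fsize (PhiF n) = 14 * n + 2.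
Proof.
move=> /enum_ord_neq_nil ne.
have := fsize_bigAnd_map (Lit Qtil true) (f := fun i => PhiF_conj i) (k := 13)
  (fun i => erefl) ne.
by rewrite size_enum_ord /=; lia.
Qed.

Section Matched.
Variable n : nat.
Implicit Types (w : nat -> letter n) (t : seq (AP n -> bool)).

Definition matched w : Prop :=
  exists j, w j Qtil /\
    forall i, exists k, j <= k /\ w k Ptil /\ w k (Pi i) = w j (Qi i).

Definition matched_before w m : Prop :=
  exists j, j < m /\ w j Qtil /\
    forall i, exists k, j <= k < m /\ w k Ptil /\ w k (Pi i) = w j (Qi i).

Lemma matched_before_ext w1 w2 m :
  (forall j a, j < m -> w1 j a = w2 j a) -> matched_before w1 m -> matched_before w2 m.
Proof.
move=> e [j [jm [qj mj]]]; exists j; rewrite -!e //; split=> //; split=> // i.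
by have [k [/andP[jk km] [pk eqk]]] := mj i; exists k; rewrite -!e ?jk.
Qed.

Lemma bounded_witnesses (T : finType) (P : T -> nat -> Prop) :
  (forall x, exists k, P x k) -> exists m, forall x, exists k, k < m /\ P x k.
Proof.
move=> ex; pose g x := proj1_sig (constructive_indefinite_description _ (ex x)).
exists (\max_x g x).+1 => x; exists (g x).
by rewrite ltnS leq_bigmax; split=> //; apply: proj2_sig.
Qed.

Lemma matched_boundedP w : matched w <-> exists m, matched_before w m.
Proof.
split=> [[j [qj mj]]|[m [j [_ [qj mj]]]]]; last first.
  by exists j; split=> // i; have [k [/andP[jk _] pk]] := mj i; exists k.
have [m bm] := bounded_witnesses mj.
exists (maxn m j.+1), j; split; first by rewrite leq_max leqnn orbT.
split=> // i; have [k [km [jk pk]]] := bm i.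
by exists k; rewrite jk leq_max km.
Qed.

Lemma sat_Phi_conj t j (i : 'I_n) :
  sat_fin t j (Phi_conj i) <-> exists k, k <= j /\
    nth blank t k Ptil /\ nth blank t k (Pi i) = nth blank t j (Qi i).
Proof.
exact: (bool_cases_iff _ (fun b => exists k, k <= j /\
  nth blank t k Ptil /\ nth blank t k (Pi i) = b)).
Qed.

Lemma sat_PhiF_conj w j (i : 'I_n) :
  sat_inf w j (PhiF_conj i) <->
  exists k, j <= k /\ w k Ptil /\ w k (Pi i) = w j (Qi i).
Proof.
exact: (bool_cases_iff _ (fun b => exists k, j <= k /\ w k Ptil /\ w k (Pi i) = b)).
Qed.

Hypothesis n_gt0 : 0 < n.

Lemma sat_Phi t : sat_fin t 0 (Phi n) <->
  exists j, j < size t /\ nth blank t j Qtil /\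
    forall i, exists k, k <= j /\
      nth blank t k Ptil /\ nth blank t k (Pi i) = nth blank t j (Qi i).
Proof.
have conjs j := bigAnd_map_iff (P := sat_fin t j) (fun _ _ => iff_refl _)
  (Lit Qtil true) (@Phi_conj n) (enum_ord_neq_nil n_gt0).
rewrite PhiE //; split=> [[j [_ [jt [qj /conjs cj]]]]|[j [jt [qj cj]]]].
  by exists j; do 2!split=> //; move=> i; apply/sat_Phi_conj/cj/mem_enum.
by exists j; do 3!split=> //; apply/conjs => i _; apply/sat_Phi_conj.
Qed.

Lemma sat_PhiF w : sat_inf w 0 (PhiF n) <-> matched w.
Proof.
have conjs j := bigAnd_map_iff (P := sat_inf w j) (fun _ _ => iff_refl _)
  (Lit Qtil true) (@PhiF_conj n) (enum_ord_neq_nil n_gt0).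
split=> [[j [_ [qj /conjs cj]]]|[j [qj cj]]].
  by exists j; split=> // i; apply/sat_PhiF_conj/cj/mem_enum.
by exists j; do 2!split=> //; apply/conjs => i _; apply/sat_PhiF_conj.
Qed.

Lemma lang_Phi t : lang_fin (Phi n) t <-> matched_before (nth blank (rev t)) (size t).
Proof.
have mirror k : k < size t -> nth blank (rev t) (size t - k.+1) = nth blank t k.
  by move=> kt; rewrite nth_rev; [congr (nth _ _ _); lia | lia].
rewrite /lang_fin sat_Phi; split=> [[_ [j [jt [qj cj]]]]|[j [jt [qj cj]]]].
  exists (size t - j.+1); rewrite mirror //; split; first lia.
  split=> // i; have [k [kj [pk ek]]] := cj i; have kt : k < size t by lia.
  by exists (size t - k.+1); rewrite !mirror //; split; first lia.
move: qj; rewrite nth_rev // => qj.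
split; first lia; exists (size t - j.+1); split; first lia; split=> // i.
have [k [/andP[jk kt] [pk ek]]] := cj i; move: pk ek; rewrite !nth_rev // => pk ek.
by exists (size t - k.+1); split; first lia.
Qed.

Lemma concat_Phi w : concat_omega (rev_lang (lang_fin (Phi n))) w <-> matched w.
Proof.
rewrite matched_boundedP; split.
  move=> [_ [w' [[t [/lang_Phi mt ->]] wE]]]; exists (size t).
  by apply: matched_before_ext mt => j a jt; rewrite wE size_rev jt.
move=> [m mw]; exists (mkseq w m), (fun i => w (i + m)); split.
  exists (rev (mkseq w m)); rewrite revK; split=> //.
  apply/lang_Phi; rewrite revK size_rev size_mkseq.
  by apply: matched_before_ext mw => j a jm; rewrite nth_mkseq.
move=> j a; rewrite size_mkseq; case: ltnP => [jm|mj]; first by rewrite nth_mkseq.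
by rewrite subnK.
Qed.

End Matched.

Section PastFormulas.
Variable A : Type.
Implicit Types (w : nat -> A -> bool) (f : form A).

Lemma sat_On_succ w t f :
  sat_inf w t.+1 (On f) <-> sat_inf w t.+1 f \/ sat_inf w t (On f).
Proof.
split=> [[j [jt fj]]|[ft|[j [jt fj]]]]; last by exists j; split=> //; apply: leqW.
  by move: jt; rewrite leq_eqVlt => /predU1P[<-|]; [left | right; exists j].
by exists t.+1.
Qed.

Lemma sat_Hn_succ w t f :
  sat_inf w t.+1 (Hn f) <-> sat_inf w t.+1 f /\ sat_inf w t (Hn f).
Proof.
split=> [hf|[ft hf] j]; first by split=> [|j /leqW]; apply: hf.
by rewrite leq_eqVlt => /predU1P[->|]; [|apply: hf].
Qed.

Lemma sat_past_local f w1 w2 t : in_LTL_past f ->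
  (forall j a, j <= t -> w1 j a = w2 j a) -> sat_inf w1 t f <-> sat_inf w2 t f.
Proof.
have down j k : k <= j -> (forall i a, i <= j -> w1 i a = w2 i a) ->
    forall i a, i <= k -> w1 i a = w2 i a.
  by move=> kj e i a ik; apply: e; apply: leq_trans kj.
elim: f t => //= [a b|f IHf g IHg|f IHf g IHg|f IHf|f IHf|f IHf|f IHf] t.
- by move=> _ ->.
- by case=> pf pg e; rewrite (IHf t pf e) (IHg t pg e).
- by case=> pf pg e; rewrite (IHf t pf e) (IHg t pg e).
- by move=> pf e; rewrite (IHf t.-1 pf (down _ _ (leq_pred t) e)).
- by move=> pf e; rewrite (IHf t.-1 pf (down _ _ (leq_pred t) e)).
- move=> pf e; split=> -[j [jt fj]]; exists j; split=> //.
    by rewrite -(IHf j pf (down _ _ jt e)).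
  by rewrite (IHf j pf (down _ _ jt e)).
- move=> pf e; split=> fj j jt; move: (fj j jt).
    by rewrite (IHf j pf (down _ _ jt e)).
  by rewrite (IHf j pf (down _ _ jt e)).
Qed.

Definition holds w t f : bool :=
  if excluded_middle_informative (sat_inf w t f) then true else false.

Lemma holdsP w t f : reflect (sat_inf w t f) (holds w t f).
Proof. by rewrite /holds; case: excluded_middle_informative => h; constructor. Qed.

Lemma holds_eq_iff w1 t1 w2 t2 f :
  holds w1 t1 f = holds w2 t2 f <-> (sat_inf w1 t1 f <-> sat_inf w2 t2 f).
Proof.
split=> [e|e]; first by split=> /holdsP; [rewrite e | rewrite -e] => /holdsP.
by apply/idP/idP => /holdsP /e /holdsP.
Qed.

Fixpoint profile w t f : seq bool := holds w t f ::
  match f with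
  | Lit _ _ => [::]
  | And a b | Or a b => profile w t a ++ profile w t b
  | Xn a | WX a | Fn a | Gn a | Yn a | WY a | On a | Hn a => profile w t a
  end.

Lemma size_profile w t f : size (profile w t f) = fsize f.
Proof.
by elim: f => //= [a IHa b IHb|a IHa b IHb|a IH|a IH|a IH|a IH|a IH|a IH|a IH|a IH];
  rewrite ?size_cat ?IHa ?IHb ?IH addn1.
Qed.

Lemma profile_sat w1 t1 w2 t2 f :
  profile w1 t1 f = profile w2 t2 f -> sat_inf w1 t1 f <-> sat_inf w2 t2 f.
Proof. by move=> /(congr1 (head true)) e; apply/holds_eq_iff; case: f e. Qed.

Lemma profile_cat_eq w1 t1 w2 t2 a b :
  profile w1 t1 a ++ profile w1 t1 b = profile w2 t2 a ++ profile w2 t2 b ->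
  profile w1 t1 a = profile w2 t2 a /\ profile w1 t1 b = profile w2 t2 b.
Proof. by move/eqP; rewrite eqseq_cat ?size_profile // => /andP[/eqP ? /eqP ?]. Qed.

Lemma profile_past_local f w1 w2 t : in_LTL_past f ->
  (forall j a, j <= t -> w1 j a = w2 j a) -> profile w1 t f = profile w2 t f.
Proof.
move=> + e; have holds_eq g : in_LTL_past g -> holds w1 t g = holds w2 t g.
  by move=> pg; apply/holds_eq_iff/sat_past_local.
elim: f => //= [a b|a IHa b IHb|a IHa b IHb|a IH|a IH|a IH|a IH] pf;
  rewrite holds_eq //; try by rewrite IH.
- by case: pf => pa pb; rewrite IHa ?IHb.
- by case: pf => pa pb; rewrite IHa ?IHb.
Qed.

Lemma profile_past_succ f w1 t1 w2 t2 : in_LTL_past f ->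
  profile w1 t1 f = profile w2 t2 f -> w1 t1.+1 =1 w2 t2.+1 ->
  profile w1 t1.+1 f = profile w2 t2.+1 f.
Proof.
move=> + + e; elim: f => //= [a b|a IHa b IHb|a IHa b IHb|a IH|a IH|a IH|a IH].
- by move=> _ _; congr (_ :: _); apply/holds_eq_iff; rewrite /= e.
- move=> [pa pb] [_ /profile_cat_eq[ea eb]].
  have {}ea := IHa pa ea; have {}eb := IHb pb eb; rewrite ea eb.
  by congr (_ :: _); apply/holds_eq_iff; rewrite /= (profile_sat ea) (profile_sat eb).
- move=> [pa pb] [_ /profile_cat_eq[ea eb]].
  have {}ea := IHa pa ea; have {}eb := IHb pb eb; rewrite ea eb.
  by congr (_ :: _); apply/holds_eq_iff; rewrite /= (profile_sat ea) (profile_sat eb).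
- move=> pa [_ ea]; rewrite (IH pa ea); congr (_ :: _).
  by apply/holds_eq_iff; rewrite /= (profile_sat ea).
- move=> pa [_ ea]; rewrite (IH pa ea); congr (_ :: _).
  by apply/holds_eq_iff; rewrite /= (profile_sat ea); split=> -[|] //; right.
- move=> pa [eh ea]; have {}ea := IH pa ea; rewrite ea; congr (_ :: _).
  apply/holds_eq_iff; rewrite !sat_On_succ (profile_sat ea).
  by have /holds_eq_iff -> := eh.
- move=> pa [eh ea]; have {}ea := IH pa ea; rewrite ea; congr (_ :: _).
  apply/holds_eq_iff; rewrite !sat_Hn_succ (profile_sat ea).
  by have /holds_eq_iff -> := eh.
Qed.

Lemma profile_past_shift f w1 t1 w2 t2 : in_LTL_past f ->
  profile w1 t1 f = profile w2 t2 f -> (forall d, w1 (t1 + d).+1 =1 w2 (t2 + d).+1) ->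
  forall d, profile w1 (t1 + d) f = profile w2 (t2 + d) f.
Proof.
move=> pf e0 e; elim=> [|d IH]; first by rewrite !addn0.
by rewrite !addnS; apply: profile_past_succ.
Qed.

End PastFormulas.

Notation vec n := {ffun 'I_n -> bool}.

Section SetWords.
Variable n : nat.

Definition q_letter (v : vec n) : letter n := fun a =>
  match a with Qtil => true | Qi i => v i | _ => false end.

Definition p_letter (v : vec n) : letter n := fun a =>
  match a with Ptil => true | Pi i => v i | _ => false end.

(* The leading blank puts a position #|S| before c even for S empty; after c, nth pads
   with blanks. *)
Definition set_word (S : {set vec n}) (c : letter n) : nat -> letter n :=
  nth blank (blank :: rcons [seq q_letter v | v <- enum S] c).

Implicit Types (S : {set vec n}) (c : letter n).

Lemma set_word_letter S c j :
  [\/ set_word S c j = blank, set_word S c j = c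
    | exists2 v, v \in S & set_word S c j = q_letter v].
Proof.
case: j => [|j]; first exact: Or31.
rewrite /set_word /= nth_rcons size_map.
case: ltnP => [jS|_]; last by case: eqP; [constructor 2 | constructor 1].
apply: Or33; exists (nth [ffun=> false] (enum S) j).
  by rewrite -mem_enum mem_nth.
by rewrite (nth_map [ffun=> false]).
Qed.

Lemma set_word_index S c v : v \in S -> set_word S c (index v (enum S)).+1 = q_letter v.
Proof.
move=> vS; have iS : index v (enum S) < size (enum S) by rewrite index_mem mem_enum.
by rewrite /set_word /= nth_rcons size_map iS (nth_map v) // nth_index ?mem_enum.
Qed.

Lemma set_word_end S c : set_word S c #|S|.+1 = c.
Proof. by rewrite /set_word /= nth_rcons size_map -cardE ltnn eqxx. Qed.

Lemma set_word_prefix S c c' j : j <= #|S| -> set_word S c j = set_word S c' j.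
Proof.
case: j => [//|j] jS; rewrite /set_word /= !nth_rcons size_map -cardE.
by rewrite jS.
Qed.

Lemma set_word_suffix S S' c d :
  set_word S c (#|S| + d).+1 = set_word S' c (#|S'| + d).+1.
Proof.
rewrite /set_word /= !nth_rcons !size_map -!cardE.
have -> : (#|S| + d < #|S|) = false by lia.
have -> : (#|S'| + d < #|S'|) = false by lia.
have -> : (#|S| + d == #|S|) = (d == 0) by lia.
by have -> : (#|S'| + d == #|S'|) = (d == 0) by lia.
Qed.

Lemma not_matched_set_word_blank S : 0 < n -> ~ matched (set_word S blank).
Proof.
move=> n_gt0 [j [_ /(_ (Ordinal n_gt0)) [k [_ [pk _]]]]].
by case: (set_word_letter S blank k) pk => [->|->|[v _ ->]].
Qed.

Lemma matched_set_word_p S v : matched (set_word S (p_letter v)) <-> v \in S.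
Proof.
split=> [[j [qj mj]]|vS]; last first.
  exists (index v (enum S)).+1; rewrite set_word_index //; split=> // i.
  exists #|S|.+1; rewrite set_word_end; split=> //.
  by rewrite ltnS cardE; apply/ltnW; rewrite index_mem mem_enum.
case: (set_word_letter S (p_letter v) j) qj mj => [->|->|[x xS ->]] //= _ mj.
suff -> : v = x by [].
apply/ffunP => i; have [k [_ [pk <-]]] := mj i.
by case: (set_word_letter S (p_letter v) k) pk => [->|->|[y _ ->]].
Qed.

End SetWords.

Lemma card_set (T : finType) : #|{set T}| = 2 ^ #|T|.
Proof. by have := card_powerset [set: T]; rewrite powersetT !cardsT. Qed.

Section PastRecognizer.
Variables (n : nat) (alpha : form (AP n)).
Hypotheses (n_gt0 : 0 < n) (alpha_past : in_LTL_past alpha).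
Hypothesis alpha_matched : forall w, sat_inf w 0 (Fn alpha) <-> matched w.

Lemma profile_set_word_inj :
  injective (fun S : {set vec n} => profile (set_word S blank) #|S| alpha).
Proof.
suff sub S S' : profile (set_word S blank) #|S| alpha =
                profile (set_word S' blank) #|S'| alpha -> {subset S <= S'}.
  by move=> S S' e; apply/setP => v; apply/idP/idP; apply: sub.
move=> e v vS.
have agree (T : {set vec n}) i a :
    i <= #|T| -> set_word T (p_letter v) i a = set_word T blank i a.
  by move=> iT; rewrite (set_word_prefix _ blank iT).
have [j [_ aj]] : exists j, 0 <= j /\ sat_inf (set_word S (p_letter v)) j alpha.
  exact/alpha_matched/matched_set_word_p.
have [jS|Sj] := leqP j #|S|.
  case: (not_matched_set_word_blank (S := S) n_gt0); apply/alpha_matched; exists j.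
  have agree_j i a : i <= j -> _ := fun ij => agree S i a (leq_trans ij jS).
  by split=> //; apply/(sat_past_local alpha_past agree_j).
apply/(matched_set_word_p S')/alpha_matched.
have e0 : profile (set_word S (p_letter v)) #|S| alpha =
          profile (set_word S' (p_letter v)) #|S'| alpha.
  rewrite (profile_past_local alpha_past (agree S)) e.
  by rewrite (profile_past_local alpha_past (agree S')).
have suffix d :
    set_word S (p_letter v) (#|S| + d).+1 =1 set_word S' (p_letter v) (#|S'| + d).+1.
  by move=> a; rewrite (set_word_suffix S S').
have := profile_past_shift alpha_past e0 suffix (j - #|S|).
rewrite subnKC ?(ltnW Sj) // => /profile_sat ej.
by exists (#|S'| + (j - #|S|)); split; last exact/ej.
Qed.

Lemma past_recognizer_size : 2 ^ n <= fsize alpha.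
Proof.
pose code (S : {set vec n}) : (fsize alpha).-tuple bool :=
  insubd [tuple of nseq (fsize alpha) false] (profile (set_word S blank) #|S| alpha).
have code_inj : injective code.
  move=> S S' /(congr1 val); rewrite !val_insubd !size_profile eqxx.
  exact: profile_set_word_inj.
have := leq_card code code_inj.
by rewrite card_set card_ffun card_tuple !card_bool card_ord leq_exp2l.
Qed.

End PastRecognizer.

Theorem lemma7 :
  exists c : nat, 0 < c /\
  forall n : nat, 1 <= n ->
    (exists phi : form (AP n),
        in_LTL_F phi /\ fsize phi <= c * n /\
        forall w : nat -> letter n,
          sat_inf w 0 phi <-> concat_omega (rev_lang (lang_fin (Phi n))) w)
    /\
    (forall psi : form (AP n), in_F_past psi ->
        (forall w : nat -> letter n,
          sat_inf w 0 psi <-> concat_omega (rev_lang (lang_fin (Phi n))) w) ->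
        2 ^ n <= fsize psi).
Proof.
exists 16; split=> // n n_gt0; split.
  exists (PhiF n); split; first exact: PhiF_LTL_F.
  split; first by rewrite fsize_PhiF //; lia.
  by move=> w; rewrite sat_PhiF // concat_Phi.
move=> _ [alpha [-> alpha_past]] psi_lang.
have alpha_lang w : sat_inf w 0 (Fn alpha) <-> matched w by rewrite psi_lang concat_Phi.
exact: leq_trans (past_recognizer_size n_gt0 alpha_past alpha_lang) (leq_addr 1 _).
Qed.
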